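(* Let $f:\mathcal X^n\to\mathcal T$, let $L:\mathcal T\times\mathcal T\to\mathbb R_+$ be a loss, $\varepsilon>0$, and let $M$ be an $L$-unbiased, $\varepsilon$-differentially private mechanism with values in $\mathcal T$. Then for all $x,x'\in\mathcal X^n$, $$\mathbb E[L(M(x),f(x))]\le e^{d_H(x,x')\varepsilon}\,\mathbb E[L(M(x'),f(x'))].$$
   Context: $d_H$ is the Hamming distance on $\mathcal X^n$; neighboring means $d_H\le1$. $M$ is $\varepsilon$-differentially private if $\mathbb P(M(x)\in S)\le e^\varepsilon\mathbb P(M(x')\in S)$ for all neighboring $x,x'$ and measurable $S$. $M$ is $L$-unbiased if $\mathbb E[L(M(x),f(x))]\le\mathbb E[L(M(x),t)]$ for all $x\in\mathcal X^n$, $t\in\mathcal T$. *)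

From HB Require Import structures.
From mathcomp Require Import all_boot all_order all_algebra.
From mathcomp Require Import all_classical all_reals all_analysis.
Set Implicit Arguments. Unset Strict Implicit. Unset Printing Implicit Defensive.
Import Order.TTheory GRing.Theory Num.Theory.
Local Open Scope ring_scope.

Definition hamming (X : Type) (n : nat) (x y : 'I_n -> X) : nat :=
  #|[set i : 'I_n | `[< x i <> y i >] ]|.

Section DP.
Context {d : measure_display} {T : measurableType d} {R : realType}
  {X : Type} {n : nat}.

Definition diff_private (eps : R) (M : ('I_n -> X) -> probability T R) : Prop :=
  forall x x' : 'I_n -> X, (hamming x x' <= 1)%N ->
  forall S : set T, measurable S ->
    (M x S <= (expR eps)%:E * M x' S)%E.

Definition L_unbiased (M : ('I_n -> X) -> probability T R)
  (L : T -> T -> R) (f : ('I_n -> X) -> T) : Prop :=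
  forall (x : 'I_n -> X) (t : T),
    (\int[M x]_y (L y (f x))%:E <= \int[M x]_y (L y t)%:E)%E.
End DP.

From HB Require Import structures.
From mathcomp Require Import all_boot all_order all_algebra.
From mathcomp Require Import all_classical all_reals all_analysis.
From mathcomp Require Import measurable_realfun.
Set Implicit Arguments. Unset Strict Implicit. Unset Printing Implicit Defensive.
Import Order.TTheory GRing.Theory Num.Theory.
Local Open Scope ring_scope.

(* Write r(x) = E[L(M(x), f(x))] for the risk of M at the dataset x.
   1. Measure comparison: if mu S <= c * nu S on every measurable S, then
      the integral of any nonnegative measurable g against mu is at most c
      times its integral against nu (apply the monotonicity of the integral
      in the measure to mu and the scaled measure c * nu).
   2. One step: for neighbours x, y, unbiasedness gives
      r(x) <= E[L(M(x), f(y))], and step 1 with the privacy bound gives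
      E[L(M(x), f(y))] <= e^eps * r(y).
   3. Chaining: two datasets at Hamming distance k + 1 are joined through a
      neighbour of the first one at distance k from the second; iterating
      the one-step bound along such a path of length d_H(x, x') yields the
      factor e^(d_H(x, x') eps). *)

Section Hamming.
Variables (X : Type) (n : nat).
Implicit Types x y : 'I_n -> X.

Lemma hamming_eq0 x y : hamming x y = 0%N -> x = y.
Proof.
move=> h0; apply/funext => i; apply: contrapT => xyi.
have : (0 < hamming x y)%N.
  by apply/card_gt0P; exists i; rewrite inE; exact/asboolP.
by rewrite h0.
Qed.

(* A dataset at distance k + 1 from x' has a neighbour at distance k from
   x': replace one differing entry by the corresponding entry of x'. *)
Lemma hamming_step x x' k :
  hamming x x' = k.+1 -> exists2 y, (hamming x y <= 1)%N & hamming y x' = k.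
Proof.
move=> hk.
have : [set i : 'I_n | `[< x i <> x' i >] ] != finset.set0.
  by apply/negP => /eqP h; rewrite /hamming h cards0 in hk.
case/set0Pn => i; rewrite inE => /asboolP xx'i.
exists (fun j => if j == i then x' i else x j).
  rewrite /hamming -(cards1 i); apply: subset_leq_card; apply/fintype.subsetP.
  by move=> j; rewrite !inE => /asboolP; case: (j =P i) => [->|_] //; move/asboolP.
move: hk; rewrite /hamming (cardsD1 i) inE asboolT // => -[<-].
apply: eq_card => j; rewrite !inE.
by case: eqP => [->|] //=; apply/asboolP => -[].
Qed.

Lemma hamming_chain (R : realType) (q : ('I_n -> X) -> \bar R) (a : R) :
  (forall x y, (hamming x y <= 1)%N -> (q x <= (expR a)%:E * q y)%E) ->
  forall x x', (q x <= (expR ((hamming x x')%:R * a))%:E * q x')%E.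
Proof.
move=> neighbour x x'; have [k hk] : exists k, hamming x x' = k by eexists.
rewrite hk; elim: k x hk => [|k IH] x hk.
  by rewrite mul0r expR0 mul1e (hamming_eq0 hk).
have [y xy yx'] := hamming_step hk.
apply: (le_trans (neighbour x y xy)).
rewrite -addn1 natrD mulrDl mul1r addrC expRD EFinM -muleA.
by rewrite lee_pmul2l ?lte_fin ?expR_gt0 // IH.
Qed.

End Hamming.

Lemma le_integral_dominated (d : measure_display) (T : measurableType d)
    (R : realType) (mu nu : {measure set T -> \bar R}) (c : R) (c_ge0 : 0 <= c)
    (g : T -> \bar R) :
  (forall S, measurable S -> (mu S <= c%:E * nu S)%E) ->
  (forall t, (0 <= g t)%E) -> measurable_fun setT g ->
  (\int[mu]_t g t <= c%:E * \int[nu]_t g t)%E.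
Proof.
move=> mu_le g_ge0 mg; pose k : {nonneg R} := NngNum c_ge0.
rewrite -[c]/(k%:num) -ge0_integral_mscale //.
exact: ge0_le_measure_integral.
Qed.

Lemma unbiased_private_neighbour (d : measure_display) (T : measurableType d)
    (R : realType) (X : Type) (n : nat) (f : ('I_n -> X) -> T)
    (L : T -> T -> R) (L_ge0 : forall s t, 0 <= L s t)
    (L_meas : forall t, measurable_fun setT (fun s => L s t))
    (eps : R) (M : ('I_n -> X) -> probability T R)
    (M_unb : L_unbiased M L f) (M_dp : diff_private eps M)
    (x y : 'I_n -> X) :
  (hamming x y <= 1)%N ->
  (\int[M x]_s (L s (f x))%:E <= (expR eps)%:E * \int[M y]_s (L s (f y))%:E)%E.
Proof.
move=> xy; apply: (le_trans (M_unb x (f y))).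
apply: le_integral_dominated; first exact/ltW/expR_gt0.
- by move=> S mS; exact: M_dp.
- by move=> s; rewrite lee_fin.
- exact/measurable_EFinP/L_meas.
Qed.

Theorem lemmaA2 (d : measure_display) (T : measurableType d) (R : realType)
  (X : Type) (n : nat) (f : ('I_n -> X) -> T) (L : T -> T -> R)
  (L_ge0 : forall s t, 0 <= L s t)
  (L_meas : forall t, measurable_fun setT (fun s => L s t))
  (eps : R) (eps_gt0 : 0 < eps)
  (M : ('I_n -> X) -> probability T R)
  (M_unb : L_unbiased M L f) (M_dp : diff_private eps M) :
  forall x x' : 'I_n -> X,
    (\int[M x]_y (L y (f x))%:E
      <= (expR ((hamming x x')%:R * eps))%:E * \int[M x']_y (L y (f x'))%:E)%E.
Proof.
pose risk x := (\int[M x]_y (L y (f x))%:E)%E.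
have neighbour x y : (hamming x y <= 1)%N ->
    (risk x <= (expR eps)%:E * risk y)%E.
  by move=> xy; exact (unbiased_private_neighbour L_ge0 L_meas M_unb M_dp xy).
exact (hamming_chain neighbour).
Qed.
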